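(* Let $m\ge 2$ and $\alpha\in[0,1]$. There exists a deterministic voting rule $f$ such that every election $\mathcal E=(N,A,\vec\sigma)$ with $m$ alternatives, in which every agent $i$ has an intensity rank $\ell_i\in[m-1]$, satisfies $$\mathsf{dist}_\alpha(f(\vec\sigma),\mathcal E)\le 2+\max(\alpha,t_{\ell_{\max}}),\qquad\text{where } \ell_{\max}=\max_{i\in N}\ell_i.$$
   Context: An election $\mathcal E=(N,A,\vec\sigma)$ has $n$ agents $N$, $m$ alternatives $A$, and $\sigma_i=(\pi_i,\Join_i)$, where $\pi_i:[m]\to A$ is a bijection ($\pi_i(1)$ most preferred) and $\Join_i:[m-1]\to\{\succ,\succ\!\!\succ\}$. A metric $d$ on $N\cup A$ is nonnegative and symmetric, satisfies the triangle inequality, and has $d(x,x)=0$. The profile $\vec\sigma$ is $\alpha$-consistent with $d$ (mandatory elicitation) if for all $i$ and $j\in[m-1]$: - $\Join_i(j)=\,\succ$ implies $d(i,\pi_i(j+1))\ge d(i,\pi_i(j))>\alpha d(i,\pi_i(j+1))$; - $\Join_i(j)=\,\succ\!\!\succ$ implies $d(i,\pi_i(j))\le\alpha d(i,\pi_i(j+1))$. $\mathsf{dist}_\alpha(a,\mathcal E)=\sup_d \sum_i d(i,a)/\min_b\sum_i d(i,b)$, with the supremum over $\alpha$-consistent $d$. A preference $(\pi,\Join)$ is moderate-up-to-$k$ if $\Join(k+1)=\,\succ\!\!\succ$ and $\Join(i)=\,\succ$ for all $i\in[k]$; it is moderate-up-to-$(m-1)$ if $\Join$ contains no $\succ\!\!\succ$.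 The intensity rank $\ell_i$ of agent $i$ is the $k$ for which $\sigma_i$ is moderate-up-to-$k$. Define - $w_1=\frac{\alpha+1}{3\alpha+1}$ and $t_1=\frac{1-\alpha}{3\alpha+1}$; - for $k>1$: $w_k=1-\frac{2\alpha}{(1-\alpha)t_{k-1}+2w_{k-1}+2\alpha}$ and $t_k=w_k+(1-w_k)t_{k-1}$. *)

From mathcomp Require Import all_boot all_order all_algebra.
From mathcomp Require Import fingroup perm.
From mathcomp Require Import all_classical all_reals.
From mathcomp Require Import ereal.
Set Implicit Arguments. Unset Strict Implicit. Unset Printing Implicit Defensive.
Import Order.TTheory GRing.Theory Num.Theory.
Local Open Scope ring_scope.

(* Positions 1..m are represented 0-indexed by 'I_m; the link index
   j in [m-1] is represented by j' : 'I_m.-1 (j = j'+1). *)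
Lemma ltn_predS_aux (m j : nat) : (j < m.-1)%N -> (j.+1 < m)%N.
Proof. by case: m. Qed.

Definition pos_lo (m : nat) (j : 'I_m.-1) : 'I_m :=
  Ordinal (ltnW (ltn_predS_aux (ltn_ord j))).
Definition pos_hi (m : nat) (j : 'I_m.-1) : 'I_m :=
  Ordinal (ltn_predS_aux (ltn_ord j)).

(* A preference sigma_i = (pi_i, Join_i): pi_i (position) = alternative,
   Join_i link = true for the strong relation (>>), false for (>). *)
Definition pref (m : nat) : Type := prod {perm 'I_m} ('I_m.-1 -> bool).

(* metric on N ∪ A (disjoint union) *)
Definition is_metric (R : realType) (n m : nat)
  (d : 'I_n + 'I_m -> 'I_n + 'I_m -> R) : Prop :=
  [/\ forall x y, 0 <= d x y,
      forall x y, d x y = d y x,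
      forall x y z, d x z <= d x y + d y z &
      forall x, d x x = 0].

Definition alpha_consistent (R : realType) (n m : nat) (alpha : R)
  (sigma : 'I_n -> pref m) (d : 'I_n + 'I_m -> 'I_n + 'I_m -> R) : Prop :=
  forall (i : 'I_n) (j : 'I_m.-1),
    let pi := (sigma i).1 in
    let dl := d (inl i) (inr (pi (pos_lo j))) in
    let dh := d (inl i) (inr (pi (pos_hi j))) in
    if (sigma i).2 j then dl <= alpha * dh
    else (dl <= dh) && (alpha * dh < dl).

Definition cost (R : realType) (n m : nat)
  (d : 'I_n + 'I_m -> 'I_n + 'I_m -> R) (a : 'I_m) : R :=
  \sum_(i < n) d (inl i) (inr a).

(* min_b sum_i d(i,b); the seed cost d a is itself one of the terms,
   so this is exactly the minimum over all b *)
Definition opt_cost (R : realType) (n m : nat)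
  (d : 'I_n + 'I_m -> 'I_n + 'I_m -> R) (a : 'I_m) : R :=
  \big[Num.min/cost d a]_(b : 'I_m) cost d b.

Definition dist_alpha (R : realType) (n m : nat) (alpha : R)
  (sigma : 'I_n -> pref m) (a : 'I_m) : \bar R :=
  ereal_sup [set x : \bar R | exists d : 'I_n + 'I_m -> 'I_n + 'I_m -> R,
     [/\ is_metric d, alpha_consistent alpha sigma d &
         x = (cost d a / opt_cost d a)%:E]].

(* moderate-up-to-k, k in [m-1] (positions 1-indexed, links 0-indexed here):
   links 1..k are weak (>), and link k+1 is strong (>>) if k <= m-2 *)
Definition moderate_upto (m : nat) (J : 'I_m.-1 -> bool) (k : nat) : Prop :=
  [/\ (1 <= k)%N, (k <= m.-1)%N,
      (forall j : 'I_m.-1, (j < k)%N -> J j = false) &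
      (forall j : 'I_m.-1, nat_of_ord j = k -> J j = true)].

(* (w_{k+1}, t_{k+1}) *)
Fixpoint wt (R : realType) (alpha : R) (k : nat) : R * R :=
  match k with
  | 0 => ((alpha + 1) / (3 * alpha + 1), (1 - alpha) / (3 * alpha + 1))
  | k'.+1 =>
      let w := (wt alpha k').1 in
      let t := (wt alpha k').2 in
      let w' := 1 - 2 * alpha / ((1 - alpha) * t + 2 * w + 2 * alpha) in
      (w', w' + (1 - w') * t)
  end.

(* t_k for k >= 1 (t 0 is an unused placeholder equal to t_1) *)
Definition t_seq (R : realType) (alpha : R) (k : nat) : R := (wt alpha k.-1).2.

(* Each agent of intensity rank k spreads one unit of weight over its k + 1
   favourite alternatives: w_k on the first one, and the remaining 1 - w_k as
   an agent of rank k - 1 would.  For every alternative b, the expected detour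
   d(b, i) + d(i, c) of agent i towards an alternative c drawn from this
   lottery is at most (1 + max(alpha, t_k)) d(i, b): the recursion defining
   (w_k, t_k) is exactly what makes the induction on k go through, using the
   alpha-consistency of the first k links and of the strong link after them.
   The aggregated weights form loads q of total mass n.  Letting the agents in
   turn remove one unit of load from the bottom of their rankings yields an
   alternative a and a fractional assignment of the agents to the loads in
   which every agent ranks a above everything assigned to it, whence
   cost(a) <= cost(b) + sum_c q(c) d(b, c) <= (2 + max(alpha, t_lmax)) cost(b). *)

From mathcomp Require Import all_boot all_order all_algebra.
From mathcomp Require Import fingroup perm.
From mathcomp Require Import all_classical all_reals.
From mathcomp Require Import ereal.
From mathcomp Require Import ring lra.
Set Implicit Arguments.
Unset Strict Implicit.
Unset Printing Implicit Defensive.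
Import Order.TTheory GRing.Theory Num.Theory.
Local Open Scope ring_scope.

Lemma big_nat_widen0 (R : zmodType) (F : nat -> R) k M : (k <= M)%N ->
  (forall u, (k < u)%N -> F u = 0) ->
  \sum_(0 <= u < M.+1) F u = \sum_(0 <= u < k.+1) F u.
Proof.
move=> le_kM F_gt; rewrite (big_cat_nat _ (_ : k.+1 <= M.+1)%N) //=.
by rewrite [X in _ + X]big_nat_cond [X in _ + X]big1 ?addr0 // => u /andP[/andP[/F_gt]].
Qed.

Lemma homo_le_upto d (T : porderType d) (x : nat -> T) K u v :
  (forall w, (w < K)%N -> (x w <= x w.+1)%O) -> (u <= v <= K)%N -> (x u <= x v)%O.
Proof.
move=> incr /andP[le_uv le_vK].
apply: (@homo_leq_in _ [pred w | w <= K]%N x _ le_refl le_trans) => //=.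
- by move=> i j _ le_jK k /andP[_ lt_kj]; exact: ltnW (leq_trans lt_kj le_jK).
- by move=> w _; exact: incr.
- exact: leq_trans le_vK.
Qed.

Lemma min1_addl_le (R : realDomainType) (a s : R) :
  0 <= a -> Num.min 1 (a + s) <= a + Num.min 1 s.
Proof.
move=> a_ge0; rewrite ge_min; have [_|_] := leP 1 s; first by rewrite lerDr a_ge0.
by rewrite lexx orbT.
Qed.

Section Sequences.
Variables (R : realType) (alpha : R).
Hypotheses (alpha_ge0 : 0 <= alpha) (alpha_le1 : alpha <= 1).

(* (w_0, t_0) = (1, -1) is the seed from which the recursion defining
   (w_k, t_k) for k > 1 also produces (w_1, t_1). *)
Definition wseq k := if k is k'.+1 then (wt alpha k').1 else 1.
Definition tseq k := if k is k'.+1 then (wt alpha k').2 else -1.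
Arguments wseq : simpl never.
Arguments tseq : simpl never.

Let wden0_neq0 : 3 * alpha + 1 != 0.
Proof. by apply: lt0r_neq0; have := alpha_ge0; lra. Qed.

Definition wden k := (1 - alpha) * tseq k + 2 * wseq k + 2 * alpha.

Lemma wseq0 : wseq 0 = 1. Proof. by []. Qed.
Lemma tseq0 : tseq 0 = -1. Proof. by []. Qed.

Lemma wden0 : wden 0 = 3 * alpha + 1.
Proof. by rewrite /wden wseq0 tseq0; ring. Qed.

Lemma wseqS k : wseq k.+1 = 1 - 2 * alpha / wden k.
Proof.
case: k => [|k]; last by rewrite /wden /wseq /tseq.
by rewrite wden0 /wseq /=; field; exact: wden0_neq0.
Qed.

Lemma tseqS k : tseq k.+1 = wseq k.+1 + (1 - wseq k.+1) * tseq k.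
Proof. by case: k => [|k]; rewrite /wseq /tseq //=; field; exact: wden0_neq0. Qed.

Lemma t_seqE k : (0 < k)%N -> t_seq alpha k = tseq k.
Proof. by case: k. Qed.

Lemma wseqS_bounds k : 2 * alpha <= wden k -> 0 <= wseq k.+1 <= 1.
Proof.
move=> den_ge; rewrite wseqS.
have [->|alpha_neq0] := eqVneq alpha 0; first by rewrite mulr0 mul0r; lra.
have alpha_gt0 : 0 < alpha by rewrite lt_def alpha_neq0.
have : 0 <= 2 * alpha / wden k <= 1 by rewrite divr_ge0 ?ler_pdivrMr //=; lra.
lra.
Qed.

Lemma wseq_tseq_bounds k : 0 <= wseq k.+1 <= 1 /\ 0 <= tseq k.+1 <= 1.
Proof.
have a0 := alpha_ge0; have a1 := alpha_le1.
elim: k => [|k [/andP[w0 w1] /andP[t0 t1]]].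
  have w1E : wseq 1 = 1 - 2 * alpha / (3 * alpha + 1) by rewrite wseqS wden0.
  have ratio_le : 2 * alpha / (3 * alpha + 1) <= 1 / 2 by rewrite ler_pdivrMr; lra.
  have ratio_ge0 : 0 <= 2 * alpha / (3 * alpha + 1) by apply: divr_ge0; lra.
  by rewrite tseqS tseq0; lra.
have /andP[w'0 w'1] : 0 <= wseq k.+2 <= 1 by apply: wseqS_bounds; rewrite /wden; nra.
by rewrite tseqS; split; apply/andP; split; nra.
Qed.

Lemma wden_ge k : 2 * alpha <= wden k.
Proof.
have a0 := alpha_ge0; have a1 := alpha_le1.
case: k => [|k]; first by rewrite wden0; lra.
by have := wseq_tseq_bounds k; rewrite /wden; nra.
Qed.

Lemma wseqS_tseqS k :
  (1 - wseq k.+1) * (2 * wseq k + tseq k) = alpha * (tseq k.+1 + wseq k.+1).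
Proof.
rewrite tseqS wseqS.
have [->|alpha_neq0] := eqVneq alpha 0; first by rewrite !(mulr0, mul0r, subr0, subrr).
have alpha_gt0 : 0 < alpha by rewrite lt_def alpha_neq0.
have : 0 < wden k by apply: lt_le_trans (wden_ge k); rewrite mulr_gt0.
by rewrite /wden => /lt0r_neq0 den_neq0; field.
Qed.

Lemma tseq_le1 k : tseq k <= 1.
Proof. by case: k => [|k]; [rewrite tseq0; lra | have [_ /andP[]] := wseq_tseq_bounds k]. Qed.

Lemma tseq_mono : {homo tseq : k k' / (k <= k')%N >-> k <= k'}.
Proof.
apply: (homo_leq le_refl le_trans) => k; rewrite tseqS.
have [/andP[w0 w1] _] := wseq_tseq_bounds k.
have := tseq_le1 k; nra.
Qed.

Lemma wseqS_step_le k (S x0 x1 : R) :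
  S <= (2 * wseq k + tseq k) * x1 -> alpha * x1 <= x0 ->
  (1 - wseq k.+1) * S <= (tseq k.+1 + wseq k.+1) * x0.
Proof.
move=> le_S le_x; have [/andP[w0 w1] /andP[t0 t1]] := wseq_tseq_bounds k.
apply: le_trans (_ : (1 - wseq k.+1) * ((2 * wseq k + tseq k) * x1) <= _).
  by apply: ler_wpM2l; lra.
rewrite mulrA wseqS_tseqS; nra.
Qed.

Fixpoint lottery k u : R :=
  match k, u with
  | 0, u => (u == 0)%:R
  | k'.+1, 0 => wseq k
  | k'.+1, u'.+1 => (1 - wseq k) * lottery k' u'
  end.

Lemma lottery_ge0 k u : 0 <= lottery k u.
Proof.
elim: k u => [|k IH] [|u] /=; rewrite ?ler0n //.
  by have [/andP[]] := wseq_tseq_bounds k.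
by have [/andP[_ w1] _] := wseq_tseq_bounds k; rewrite mulr_ge0 ?subr_ge0.
Qed.

Lemma lottery_gt k u : (k < u)%N -> lottery k u = 0.
Proof. by elim: k u => [|k IH] [|u] //= /IH ->; rewrite mulr0. Qed.

Lemma lottery_sumS k (F : nat -> R) :
  \sum_(0 <= u < k.+2) lottery k.+1 u * F u =
  wseq k.+1 * F 0%N + (1 - wseq k.+1) * \sum_(0 <= u < k.+1) lottery k u * F u.+1.
Proof.
rewrite big_nat_recl // mulr_sumr; congr (_ + _).
by apply: eq_bigr => u _ /=; rewrite mulrA.
Qed.

Lemma lottery_sum k : \sum_(0 <= u < k.+1) lottery k u = 1.
Proof.
elim: k => [|k IH]; first by rewrite big_nat1.
by rewrite big_nat_recl //= -mulr_sumr IH mulr1 addrC subrK.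
Qed.

Lemma lottery_sum_wide k M : (k <= M)%N -> \sum_(0 <= u < M.+1) lottery k u = 1.
Proof. by move=> le_kM; rewrite (big_nat_widen0 le_kM) ?lottery_sum // => u /lottery_gt. Qed.

Definition moderate_chain (x : nat -> R) k :=
  [/\ forall u, (u < k)%N -> x u <= x u.+1,
      forall u, (u < k)%N -> alpha * x u.+1 <= x u & 0 <= x 0%N].

Lemma moderate_chain_behead x k :
  moderate_chain x k.+1 -> moderate_chain (fun u => x u.+1) k.
Proof.
case=> incr weak x0_ge0; split=> /= [u|u|]; [exact: (incr u.+1) | exact: (weak u.+1) |].
exact: le_trans x0_ge0 (incr 0%N isT).
Qed.

Lemma lottery_mean_le k x : moderate_chain x k ->
  \sum_(0 <= u < k.+1) lottery k u * x u <= (2 * wseq k + tseq k) * x 0%N.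
Proof.
elim: k x => [|k IH] x chain_x.
  by case: chain_x => _ _ x0_ge0; rewrite big_nat1 wseq0 tseq0 /=; lra.
have [_ weak _] := chain_x.
have := wseqS_step_le (IH _ (moderate_chain_behead chain_x)) (weak 0%N isT).
by rewrite lottery_sumS; nra.
Qed.

Definition detour (x : nat -> R) s u := if u == s then 0 else x s + x u.

Lemma lottery_detour_le k x s : moderate_chain x k -> (s <= k)%N ->
  \sum_(0 <= u < k.+1) lottery k u * detour x s u <= (1 + tseq k) * x s.
Proof.
elim: k x s => [|k IH] x s chain_x.
  by rewrite leqn0 => /eqP ->; rewrite big_nat1 /detour eqxx mulr0 tseq0 subrr mul0r.
have [incr weak x0_ge0] := chain_x.
have chain_x' := moderate_chain_behead chain_x.
have [/andP[w0 w1] _] := wseq_tseq_bounds k.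
rewrite lottery_sumS; case: s => [_|s le_sk].
  have tail_le := wseqS_step_le (lottery_mean_le chain_x') (weak 0%N isT).
  have detour0S u : detour x 0 u.+1 = x 0%N + x u.+1 by [].
  under eq_bigr do rewrite detour0S mulrDr.
  rewrite /detour eqxx big_split /= -mulr_suml lottery_sum mulr0 add0r mul1r.
  nra.
have detourSS u : detour x s.+1 u.+1 = detour (fun u => x u.+1) s u.
  by rewrite /detour eqSS.
under eq_bigr do rewrite detourSS.
have := IH _ s chain_x' le_sk.
have x0_le : x 0%N <= x s.+1 by apply: (homo_le_upto incr).
have -> : detour x s.+1 0 = x s.+1 + x 0%N by [].
rewrite tseqS; nra.
Qed.

Lemma lottery_detour_le_max l M x s :
  (l <= M)%N -> (s <= M)%N ->
  (forall u, (u < M)%N -> x u <= x u.+1) ->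
  (forall u, (u < l)%N -> alpha * x u.+1 <= x u) ->
  ((l < M)%N -> x l <= alpha * x l.+1) -> 0 <= x 0%N ->
  \sum_(0 <= u < M.+1) lottery l u * detour x s u <= (1 + Num.max alpha (tseq l)) * x s.
Proof.
move=> le_lM le_sM incr weak strong x0_ge0.
have xs_ge0 : 0 <= x s by apply: le_trans x0_ge0 (homo_le_upto incr _).
rewrite (big_nat_widen0 le_lM) => [|u /lottery_gt ->]; last exact: mul0r.
have [le_sl|lt_ls] := leqP s l.
  have chain_x : moderate_chain x l.
    by split=> // u lt_ul; apply: incr (leq_trans lt_ul le_lM).
  apply: le_trans (lottery_detour_le chain_x le_sl) _.
  by apply: ler_wpM2r => //; rewrite lerD2l le_max lexx orbT.
apply: le_trans (_ : _ <= \sum_(0 <= u < l.+1) lottery l u * ((1 + alpha) * x s)) _.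
  rewrite big_nat_cond [X in _ <= X]big_nat_cond.
  apply: ler_sum => u /andP[/andP[_ lt_ul] _]; apply: ler_wpM2l; first exact: lottery_ge0.
  rewrite /detour ltn_eqF ?(leq_trans lt_ul lt_ls) //.
  have : x u <= x l by apply: (homo_le_upto incr); rewrite -ltnS lt_ul.
  have : alpha * x l.+1 <= alpha * x s by apply/ler_wpM2l/(homo_le_upto incr)/andP.
  have := strong (leq_trans lt_ls le_sM); lra.
by rewrite -mulr_suml lottery_sum mul1r ler_wpM2r // lerD2l le_max lexx.
Qed.

End Sequences.

Section TailUnit.
Variables (R : realFieldType) (N : nat) (f : nat -> R).
Hypothesis f_ge0 : forall u, 0 <= f u.

Definition tail_sum u := \sum_(u <= r < N) f r.

(* The part of [f u] that lies within the last unit of mass of [f]. *)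
Definition tail_unit u := Num.min 1 (tail_sum u) - Num.min 1 (tail_sum u.+1).

Lemma tail_sumS u : (u < N)%N -> tail_sum u = f u + tail_sum u.+1.
Proof. by move=> lt_uN; rewrite /tail_sum big_ltn. Qed.

Lemma tail_sum_ge0 u : 0 <= tail_sum u.
Proof. exact: sumr_ge0. Qed.

Lemma tail_sum_le_succ u : tail_sum u.+1 <= tail_sum u.
Proof.
have [lt_uN|le_Nu] := ltnP u N; first by rewrite (tail_sumS lt_uN) lerDr.
by rewrite {1}/tail_sum big_geq ?tail_sum_ge0 // (leq_trans le_Nu).
Qed.

Lemma tail_sum_anti u v : (u <= v)%N -> tail_sum v <= tail_sum u.
Proof.
apply: (homo_leq (r := fun x y => y <= x)) => [x|y x z le_yx le_zy|]; first exact: lexx.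
  exact: le_trans le_zy le_yx.
exact: tail_sum_le_succ.
Qed.

Lemma tail_unit_ge0 u : 0 <= tail_unit u.
Proof. by rewrite subr_ge0 le_min2 ?tail_sum_le_succ. Qed.

Lemma tail_unit_le u : tail_unit u <= f u.
Proof.
rewrite lerBlDr; have [lt_uN|le_Nu] := ltnP u N.
  by rewrite (tail_sumS lt_uN) min1_addl_le.
by rewrite /tail_sum !big_geq ?(leq_trans le_Nu) // lerDr.
Qed.

Lemma sum_tail_unit : 1 <= tail_sum 0 -> \sum_(0 <= u < N) tail_unit u = 1.
Proof.
move=> le_1S; under eq_bigr do rewrite /tail_unit -opprB.
rewrite sumrN telescope_sumr // opprB (min_idPl le_1S).
have -> : tail_sum N = 0 by rewrite /tail_sum big_geq.
by rewrite (min_idPr ler01) subr0.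
Qed.

Lemma tail_unit_support u u' : (u' < N)%N ->
  0 < tail_unit u -> tail_unit u' < f u' -> (u' <= u)%N.
Proof.
move=> lt_u'N unit_gt0 unit_lt; rewrite leqNgt; apply/negP => lt_uu'.
have S_lt1 : tail_sum u.+1 < 1.
  rewrite ltNge; apply/negP => le_1S; move: unit_gt0.
  have le_1S' := le_trans le_1S (tail_sum_le_succ u).
  by rewrite /tail_unit (min_idPl le_1S) (min_idPl le_1S') subrr ltxx.
have S'_gt1 : 1 < tail_sum u'.
  move: unit_lt; rewrite /tail_unit (tail_sumS lt_u'N).
  have [//|le_S1] := ltP 1 (f u' + tail_sum u'.+1).
  have le_s1 : tail_sum u'.+1 <= 1 by have := f_ge0 u'; lra.
  by rewrite (min_idPr le_s1) addrK ltxx.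
have := tail_sum_anti lt_uu'; lra.
Qed.

End TailUnit.

Section FractionalVeto.
Variables (R : realFieldType) (M : nat).
Implicit Types (p : {perm 'I_M.+1}) (q : 'I_M.+1 -> R).

Definition position p c : nat := (p^-1)%g c.

Lemma sum_position p (F : nat -> R) :
  \sum_c F (position p c) = \sum_(0 <= u < M.+1) F u.
Proof.
rewrite (reindex_inj (h := p) perm_inj) /= big_mkord.
by apply: eq_bigr => u _; rewrite /position permK.
Qed.

Lemma perm_inord_position p c : p (inord (position p c)) = c.
Proof. by rewrite /position inord_val permKV. Qed.

Definition bottom_unit q p c :=
  tail_unit M.+1 (fun u => q (p (inord u))) (position p c).

Section BottomUnit.
Variables (q : 'I_M.+1 -> R) (p : {perm 'I_M.+1}).
Hypothesis q_ge0 : forall c, 0 <= q c.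

Lemma bottom_unit_ge0 c : 0 <= bottom_unit q p c.
Proof. exact: tail_unit_ge0. Qed.

Lemma bottom_unit_le c : bottom_unit q p c <= q c.
Proof. by rewrite -{2}(perm_inord_position p c); apply: tail_unit_le. Qed.

Lemma sum_bottom_unit : 1 <= \sum_c q c -> \sum_c bottom_unit q p c = 1.
Proof.
move=> le_1q; rewrite (sum_position p (tail_unit _ _)) sum_tail_unit //.
rewrite /tail_sum -(sum_position p).
by under eq_bigr do rewrite perm_inord_position.
Qed.

Lemma bottom_unit_support a c : 0 < bottom_unit q p c ->
  bottom_unit q p a < q a -> (position p a <= position p c)%N.
Proof.
have lt_aM : (position p a < M.+1)%N by exact: ltn_ord.
move=> unit_c_gt0 unit_a_lt; apply: (tail_unit_support _ lt_aM unit_c_gt0) => //.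
by rewrite perm_inord_position.
Qed.

End BottomUnit.

Definition veto_assignment n (pi : 'I_n -> {perm 'I_M.+1}) q a
    (v : 'I_n -> 'I_M.+1 -> R) :=
  [/\ forall i c, 0 <= v i c, forall i, \sum_c v i c = 1,
      forall c, \sum_i v i c = q c &
      forall i c, 0 < v i c -> (position (pi i) a <= position (pi i) c)%N].

Lemma fractional_veto n (pi : 'I_n -> {perm 'I_M.+1}) q :
  (0 < n)%N -> (forall c, 0 <= q c) -> \sum_c q c = n%:R ->
  exists a, 0 < q a /\ exists v, veto_assignment pi q a v.
Proof.
case: n pi => // n pi _; elim: n pi q => [|n IH] pi q q_ge0 sum_q.
  have [c0 q_c0] : exists c, 0 < q c.
    apply/existsP; apply: contraT; rewrite negb_exists => /forallP q_le0.
    have : \sum_c q c <= 0 by apply: sumr_le0 => c _; rewrite leNgt q_le0.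
    by rewrite sum_q ler10.
  have [a q_a a_min] := arg_minnP (P := fun c => 0 < q c) (position (pi ord0)) q_c0.
  exists a; split=> //; exists (fun _ => q); split=> [i c|i|c|i c q_c].
  - exact: q_ge0.
  - by rewrite sum_q.
  - by rewrite big_ord1.
  - by rewrite (ord1 i); exact: a_min.
(* The first agent takes the bottom unit of the loads; as a keeps some of the
   remaining load, that agent ranks a above everything it took. *)
pose v0 := bottom_unit q (pi ord0).
have sum_v0 : \sum_c v0 c = 1 by apply: sum_bottom_unit; rewrite // sum_q ler1n.
pose q' c := q c - v0 c.
have q'_ge0 c : 0 <= q' c by rewrite subr_ge0 bottom_unit_le.
have sum_q' : \sum_c q' c = n.+1%:R by rewrite sumrB sum_q sum_v0 -natr1 addrK.
have [a [q'_a [v' [v'_ge0 sum_v' load_v' pref_v']]]] :=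
  IH (fun i => pi (lift ord0 i)) q' q'_ge0 sum_q'.
exists a; split; first by apply: lt_le_trans q'_a _; rewrite lerBlDr lerDl bottom_unit_ge0.
exists (fun i c => if unlift ord0 i is Some j then v' j c else v0 c).
split=> [i c|i|c|i c].
- by case: unliftP => [j|] _; [exact: v'_ge0 | exact: bottom_unit_ge0].
- by case: unliftP => [j|] _.
- rewrite big_ord_recl unlift_none.
  under eq_bigr do rewrite liftK.
  by rewrite load_v' /q' addrC subrK.
- case: unliftP => [j ->|-> v0_c]; first exact: pref_v'.
  by apply: bottom_unit_support => //; rewrite -subr_gt0.
Qed.

Lemma veto_assignment_sum_le n (pi : 'I_n -> {perm 'I_M.+1}) q a v
    (D : 'I_n -> 'I_M.+1 -> R) (g : 'I_n -> R) (h : 'I_M.+1 -> R) :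
  veto_assignment pi q a v ->
  (forall i c c', (position (pi i) c <= position (pi i) c')%N -> D i c <= D i c') ->
  (forall i c, D i c <= g i + h c) ->
  \sum_i D i a <= \sum_i g i + \sum_c q c * h c.
Proof.
case=> v_ge0 sum_v load_v pref_v D_mono D_le.
have D_a_le i : D i a <= g i + \sum_c v i c * h c.
  rewrite -[D i a]mul1r -(sum_v i) mulr_suml.
  apply: le_trans (_ : _ <= \sum_c v i c * (g i + h c)) _.
    apply: ler_sum => c _; have [v_gt0|v_le0] := ltP 0 (v i c).
      by rewrite ler_wpM2l ?v_ge0 // (le_trans (D_mono _ _ _ (pref_v _ _ v_gt0))).
    by rewrite (@le_anti _ _ (v i c) 0) ?v_le0 ?v_ge0 // !mul0r.
  under eq_bigr do rewrite mulrDr.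
  by rewrite big_split -mulr_suml sum_v mul1r.
apply: le_trans (ler_sum _ (fun i _ => D_a_le i)) _.
rewrite big_split /= exchange_big /=.
by rewrite lerD2l; under eq_bigr do rewrite -mulr_suml load_v.
Qed.

End FractionalVeto.

Lemma moderate_upto_inj m (J : 'I_m.-1 -> bool) k1 k2 :
  moderate_upto J k1 -> moderate_upto J k2 -> k1 = k2.
Proof.
wlog le_k12 : k1 k2 / (k1 <= k2)%N.
  move=> wlog_le J1 J2; have [le_k12|/ltnW le_k21] := leqP k1 k2; first exact: wlog_le.
  exact/esym/wlog_le.
move=> [_ _ _ strong1] [_ le_k2m weak2 _]; apply/eqP; rewrite eqn_leq le_k12 leqNgt.
apply/negP => lt_k12; have lt_k1m : (k1 < m.-1)%N by exact: leq_trans lt_k12 le_k2m.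
by have := strong1 (Ordinal lt_k1m) erefl; rewrite weak2.
Qed.

Section Election.
Variables (R : realType) (alpha : R).
Hypotheses (alpha_ge0 : 0 <= alpha) (alpha_le1 : alpha <= 1).
Variables (M n : nat) (sigma : 'I_n -> pref M.+1).

Let ranking i := (sigma i).1.

Section Metric.
Variable d : 'I_n + 'I_M.+1 -> 'I_n + 'I_M.+1 -> R.
Hypotheses (d_metric : is_metric d) (d_consistent : alpha_consistent alpha sigma d).

Definition ranked_dist i u := d (inl i) (inr (ranking i (inord u))).

Lemma ranked_dist_position i c : ranked_dist i (position (ranking i) c) = d (inl i) (inr c).
Proof. by rewrite /ranked_dist perm_inord_position. Qed.

Lemma ranked_dist_link i u (lt_uM : (u < M)%N) :
  let x := ranked_dist i in
  if (sigma i).2 (Ordinal lt_uM) then x u <= alpha * x u.+1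
  else (x u <= x u.+1) && (alpha * x u.+1 < x u).
Proof.
have := d_consistent i (Ordinal lt_uM).
have -> : @pos_lo M.+1 (Ordinal lt_uM) = inord u :> 'I_M.+1.
  by apply: val_inj; rewrite /= inordK // ltnW.
have -> : @pos_hi M.+1 (Ordinal lt_uM) = inord u.+1 :> 'I_M.+1.
  by apply: val_inj; rewrite /= inordK.
done.
Qed.

Lemma ranked_dist_step i u : (u < M)%N -> ranked_dist i u <= ranked_dist i u.+1.
Proof.
move=> lt_uM; have /= := ranked_dist_link i lt_uM; case: ((sigma i).2 _) => [le_x|/andP[] //].
have [d_ge0 _ _ _] := d_metric; have := d_ge0 (inl i) (inr (ranking i (inord u.+1))).
rewrite -/(ranked_dist i u.+1); have := alpha_le1; nra.
Qed.

Lemma dist_position_mono i c c' : (position (ranking i) c <= position (ranking i) c')%N ->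
  d (inl i) (inr c) <= d (inl i) (inr c').
Proof.
move=> le_cc'; rewrite -!ranked_dist_position; apply: (homo_le_upto (ranked_dist_step i)).
by rewrite le_cc' -ltnS ltn_ord.
Qed.

Lemma lottery_cost_le i l b : moderate_upto (sigma i).2 l ->
  \sum_c lottery alpha l (position (ranking i) c) * d (inr b) (inr c)
    <= (1 + Num.max alpha (tseq alpha l)) * d (inl i) (inr b).
Proof.
case=> _ le_lM weak strong; have [d_ge0 d_sym d_tri d_refl] := d_metric.
set x := ranked_dist i; set s := position (ranking i) b.
under eq_bigr => c _ do rewrite -{2}(perm_inord_position (ranking i) c).
rewrite (sum_position _ (fun u => lottery alpha l u * d (inr b) (inr (ranking i (inord u))))).
apply: le_trans (_ : _ <= \sum_(0 <= u < M.+1) lottery alpha l u * detour x s u) _.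
  apply: ler_sum => u _; apply: ler_wpM2l; first exact: lottery_ge0.
  rewrite /detour; case: eqP => [->|_]; first by rewrite perm_inord_position d_refl.
  by rewrite /x ranked_dist_position [d (inl i) _]d_sym; exact: d_tri.
rewrite -ranked_dist_position; apply: lottery_detour_le_max => //.
- by rewrite -ltnS ltn_ord.
- exact: ranked_dist_step.
- move=> u lt_ul; have lt_uM := leq_trans lt_ul le_lM.
  by have := ranked_dist_link i lt_uM; rewrite weak // => /andP[_ /ltW].
- by move=> lt_lM; have := ranked_dist_link i lt_lM; rewrite strong.
- exact: d_ge0.
Qed.

End Metric.

Lemma exists_cost_bounded_winner l : (forall i, moderate_upto (sigma i).2 (l i)) ->
  exists a, forall d, is_metric d -> alpha_consistent alpha sigma d -> forall b,
    cost d a <= (2 + Num.max alpha (t_seq alpha (\max_i l i))) * cost d b.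
Proof.
move=> moderate_l; have [n0|n_gt0] := posnP n.
  exists ord0 => d _ _ b.
  suff sum0 (F : 'I_n -> R) : \sum_i F i = 0 by rewrite /cost !sum0 mulr0.
  by apply: big1 => i _; exfalso; move: (ltn_ord i); rewrite [X in (_ < X)%N]n0.
set L := (\max_i l i)%N; set bound := Num.max alpha (t_seq alpha L).
pose q c := \sum_i lottery alpha (l i) (position (ranking i) c).
have q_ge0 c : 0 <= q c by apply: sumr_ge0 => j _; exact: lottery_ge0.
have sum_q : \sum_c q c = n%:R.
  rewrite exchange_big /= -[n in RHS]card_ord -sumr_const; apply: eq_bigr => i _.
  by rewrite sum_position lottery_sum_wide //; case: (moderate_l i).
have [a [_ [v veto_v]]] := fractional_veto ranking n_gt0 q_ge0 sum_q.
exists a => d d_metric d_consistent b; have [d_ge0 d_sym d_tri _] := d_metric.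
have := veto_assignment_sum_le veto_v (dist_position_mono d_metric d_consistent)
  (fun i c => d_tri (inl i) (inr b) (inr c)).
rewrite -/(cost d a) -/(cost d b) => cost_a_le.
suff : \sum_c q c * d (inr b) (inr c) <= (1 + bound) * cost d b by lra.
under eq_bigr do rewrite mulr_suml.
rewrite exchange_big /= /cost mulr_sumr; apply: ler_sum => i _.
apply: le_trans (lottery_cost_le d_metric d_consistent b (moderate_l i)) _.
have [le1_l _ _ _] := moderate_l i; have le_lL : (l i <= L)%N by exact: leq_bigmax.
have t_le : tseq alpha (l i) <= t_seq alpha L by rewrite t_seqE ?tseq_mono ?(leq_trans le1_l).
by rewrite ler_wpM2r // lerD2l ge_max le_max lexx /= le_max t_le orbT.
Qed.

Lemma exists_winner : exists a, forall l,
  (forall i, moderate_upto (sigma i).2 (l i)) ->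
  forall d, is_metric d -> alpha_consistent alpha sigma d -> forall b,
    cost d a <= (2 + Num.max alpha (t_seq alpha (\max_i l i))) * cost d b.
Proof.
have [[l moderate_l]|no_rank] := pselect (exists l, forall i, moderate_upto (sigma i).2 (l i)).
  have [a a_le] := exists_cost_bounded_winner moderate_l.
  exists a => l' moderate_l'; suff -> : l' = l by [].
  by apply: funext => i; exact: moderate_upto_inj (moderate_l' i) (moderate_l i).
by exists ord0 => l moderate_l; case: no_rank; exists l.
Qed.

End Election.

Lemma dist_alpha_le (R : realType) n m (alpha : R) (sigma : 'I_n -> pref m) a (B : R) :
  0 <= B ->
  (forall d, is_metric d -> alpha_consistent alpha sigma d ->
     forall b, cost d a <= B * cost d b) ->
  (dist_alpha alpha sigma a <= B%:E)%E.
Proof.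
move=> B_ge0 cost_a_le; apply: ge_ereal_sup => _ [d [d_metric d_consistent ->]].
have [d_ge0 _ _ _] := d_metric.
have cost_ge0 b : 0 <= cost d b by apply: sumr_ge0 => i _.
have cost_a_le_opt : cost d a <= B * opt_cost d a.
  rewrite /opt_cost; apply: (big_ind (fun y => cost d a <= B * y)) => //.
  - exact: cost_a_le.
  - by move=> y z; case: (leP y z).
  - by move=> b _; exact: cost_a_le.
rewrite lee_fin; have [opt_le0|opt_gt0] := leP (opt_cost d a) 0.
  have cost_a0 : cost d a = 0.
    by apply/le_anti; rewrite cost_ge0 (le_trans cost_a_le_opt) // mulr_ge0_le0.
  by rewrite cost_a0 mul0r.
by rewrite ler_pdivrMr // mulrC.
Qed.

Theorem theorem4 (R : realType) (m : nat) (alpha : R) :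
  (2 <= m)%N -> 0 <= alpha <= 1 ->
  exists f : forall n : nat, ('I_n -> pref m) -> 'I_m,
    forall (n : nat) (sigma : 'I_n -> pref m) (l : 'I_n -> nat),
      (forall i : 'I_n, moderate_upto (sigma i).2 (l i)) ->
      (dist_alpha alpha sigma (f n sigma)
         <= (2 + Num.max alpha (t_seq alpha (\max_(i < n) l i)%N))%:E)%E.
Proof.
move=> /ltnW; case: m => [//|M] _ /andP[alpha_ge0 alpha_le1].
exists (fun n sigma => sval (cid (exists_winner alpha_ge0 alpha_le1 sigma))).
move=> n sigma l moderate_l; apply: dist_alpha_le => [|d d_metric d_consistent].
  by rewrite addr_ge0 // le_max alpha_ge0.
exact: (svalP (cid (exists_winner alpha_ge0 alpha_le1 sigma))).
Qed.
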